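(* For any $n\ge1$, the map $\lambda$ defined on covering pairs $u\lessdot v$ of $(\mathsf{Tr}(n),\preccurlyeq)$ by $\lambda(u,v):=(i,u_i)$, where $i$ is the unique index with $u_i\neq v_i$, is an EL-labelling of $(\mathsf{Tr}(n),\preccurlyeq)$ with values in $\mathbb{Z}^2$ ordered lexicographically. Moreover, there is at most one $\lambda$-weakly decreasing saturated chain between any pair of comparable elements of $\mathsf{Tr}(n)$.
   Context: A triword of size $n$ is a word $u=u_1\cdots u_n$ with $u_i\in\{0,1,2\}$, $u_1\ne 2$, and such that $u_i=0$ implies $u_j\neq 1$ for all $j>i$; $\mathsf{Tr}(n)$ is their set, ordered componentwise: $u\preccurlyeq v$ iff $u_i\le v_i$ for all $i$. Covering pairs in this poset differ in exactly one letter, so $\lambda$ is well defined. A saturated chain is a sequence $x_1\lessdot x_2\lessdot\cdots\lessdot x_r$ of successive coverings; its label sequence is $(\lambda(x_1,x_2),\dots,\lambda(x_{r-1},x_r))$. A saturated chain is $\lambda$-increasing (resp. $\lambda$-weakly decreasing) if its label sequence is strictly increasing (resp. weakly decreasing) in the order of $\mathbb{Z}^2$ (lexicographic); one chain is $\lambda$-smaller than another if its label sequence is smaller in the lexicographic order on sequences induced by that order. For a bounded poset, $\lambda$ is an EL-labelling if for all $x\preccurlyeq y$ there is exactly one $\lambda$-increasing saturated chain from $x$ to $y$, and it is $\lambda$-minimal (lexicographically smallest) among all saturated chains from $x$ to $y$. *)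

From mathcomp Require Import all_boot all_order all_algebra.
Set Implicit Arguments. Unset Strict Implicit. Unset Printing Implicit Defensive.
Import Order.TTheory GRing.Theory Num.Theory.

(* Words of size n over {0,1,2}: u i is the letter u_{i+1} (0-based index). *)
Definition word (n : nat) := {ffun 'I_n -> 'I_3}.

Definition letter n (u : word n) (i : 'I_n) : nat := val (u i).

Definition is_triword n (u : word n) : bool :=
  [forall i : 'I_n, (val i == 0) ==> (letter u i != 2)] &&
  [forall i : 'I_n, forall j : 'I_n,
     ((letter u i == 0) && (val i < val j)) ==> (letter u j != 1)].

Definition wle n (u v : word n) : bool := [forall i, letter u i <= letter v i].
Definition wlt n (u v : word n) : bool := wle u v && (u != v).

Definition covers n (u v : word n) : bool :=
  [&& is_triword u, is_triword v, wlt u v &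
      ~~ [exists w : word n, [&& is_triword w, wlt u w & wlt w v]]].

Definition lam n (u v : word n) : int * int :=
  match [pick i : 'I_n | u i != v i] with
  | Some i => (Posz (val i).+1, Posz (letter u i))
  | None => (Posz 0, Posz 0)
  end.

Definition ltZ2 (a b : int * int) : bool :=
  ((a.1 < b.1)%R) || ((a.1 == b.1) && (a.2 < b.2)%R).
Definition leZ2 (a b : int * int) : bool := (a == b) || ltZ2 a b.

Fixpoint lexle (s t : seq (int * int)) : bool :=
  match s, t with
  | [::], _ => true
  | _ :: _, [::] => false
  | a :: s', b :: t' => ltZ2 a b || ((a == b) && lexle s' t')
  end.

(* A saturated chain x = x_1 <. x_2 <. ... <. x_r = y is represented by x
   together with the sequence s = [:: x_2; ...; x_r]. *)
Definition sat_chain n (x y : word n) (s : seq (word n)) : Prop :=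
  is_triword x /\ path (@covers n) x s /\ last x s = y.

Definition labels n (x : word n) (s : seq (word n)) : seq (int * int) :=
  pairmap (@lam n) x s.

Definition lam_increasing n (x : word n) s : bool := sorted ltZ2 (labels x s).
Definition lam_weakly_decreasing n (x : word n) s : bool :=
  sorted (fun a b => leZ2 b a) (labels x s).

Definition bounded_Tr n : Prop :=
  exists bot top : word n, [/\ is_triword bot, is_triword top &
    forall u, is_triword u -> wle bot u /\ wle u top].

Definition EL_labelling n : Prop :=
  bounded_Tr n /\
  forall x y : word n, is_triword x -> is_triword y -> wle x y ->
    exists s, [/\ sat_chain x y s, lam_increasing x s,
      (forall s', sat_chain x y s' -> lam_increasing x s' -> s' = s) &
      (forall t, sat_chain x y t -> lexle (labels x s) (labels x t))].

Definition at_most_one_weakly_decreasing n : Prop :=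
  forall x y : word n, is_triword x -> is_triword y -> wle x y ->
    forall s t, sat_chain x y s -> lam_weakly_decreasing x s ->
                sat_chain x y t -> lam_weakly_decreasing x t -> s = t.

From mathcomp Require Import all_boot all_order all_algebra.
Set Implicit Arguments. Unset Strict Implicit. Unset Printing Implicit Defensive.
Import Order.TTheory.

(* A covering u <. v of Tr(n) raises exactly one letter: if u < v differed at
   positions i < j, the word equal to v before j and to u from j on would be a
   triword strictly between them.  Hence lambda(u, v) records where u changes,
   and a cover of u is determined by that position.  Every position where x and
   y differ is the position of some label of any saturated chain from x to y,
   so a lambda-increasing (resp. weakly decreasing) chain must start at the
   first (resp. last) such position; induction along the chain gives uniqueness
   of both kinds of chains and lexicographic minimality of the increasing one.
   An increasing chain exists: step from x to a cover below the word that agrees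
   with y up to the first difference of x and y, and recurse. *)

Lemma ltZ2_trans : transitive ltZ2.
Proof.
move=> b a c; rewrite /ltZ2 => /orP[ab|/andP[/eqP-> ab]] /orP[bc|/andP[/eqP<- bc]].
- by rewrite (lt_trans ab bc).
- by rewrite ab.
- by rewrite bc.
- by rewrite eqxx (lt_trans ab bc) orbT.
Qed.

Lemma leZ2_trans : transitive leZ2.
Proof.
move=> b a c /orP[/eqP->//|ab] /orP[/eqP<-|bc]; rewrite /leZ2 ?ab ?orbT //.
by rewrite (ltZ2_trans ab bc) orbT.
Qed.

Lemma ltZ2_fst a b : ltZ2 a b -> (a.1 <= b.1)%R.
Proof. by case/orP=> [/ltW|/andP[/eqP-> _]]. Qed.

Lemma leZ2_fst a b : leZ2 a b -> (a.1 <= b.1)%R.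
Proof. by case/orP=> [/eqP->|/ltZ2_fst]. Qed.

Section Triwords.
Variable n : nat.
Implicit Types (u v w x y z : word n) (s t : seq (word n)).

Lemma letter_inj u v : (forall i, letter u i = letter v i) -> u = v.
Proof. by move=> E; apply/ffunP=> i; apply: val_inj; apply: E. Qed.

Lemma letter_le2 u i : letter u i <= 2.
Proof. by rewrite -ltnS; apply: ltn_ord. Qed.

Lemma triwordP u :
  reflect ((forall i : 'I_n, val i = 0 -> letter u i != 2) /\
           (forall i j : 'I_n, letter u i = 0 -> val i < val j -> letter u j != 1))
          (is_triword u).
Proof.
apply: (iffP andP) => [[/forallP first_ok /forallP zero_ok]|[first_ok zero_ok]].
  split=> [i i0|i j ui0 lt_ij]; first by move/implyP: (first_ok i); apply; apply/eqP.
  by move/forallP/(_ j)/implyP: (zero_ok i); apply; rewrite ui0 lt_ij.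
split; apply/forallP=> i; first by apply/implyP=> /eqP/first_ok.
by apply/forallP=> j; apply/implyP=> /andP[/eqP ui0 lt_ij]; apply: zero_ok ui0 lt_ij.
Qed.

Lemma wleP u v : reflect (forall i, letter u i <= letter v i) (wle u v).
Proof. exact: forallP. Qed.

Lemma wle_refl u : wle u u.
Proof. by apply/wleP. Qed.

Lemma wle_trans v u w : wle u v -> wle v w -> wle u w.
Proof. by move=> /wleP uv /wleP vw; apply/wleP=> i; apply: leq_trans (uv i) (vw i). Qed.

Lemma wle_anti u v : wle u v -> wle v u -> u = v.
Proof. by move=> /wleP uv /wleP vu; apply: letter_inj=> i; apply/anti_leq; rewrite uv vu. Qed.

Lemma wltW u v : wlt u v -> wle u v.
Proof. by case/andP. Qed.

Lemma wlt_letter u v : wlt u v -> exists i, letter u i < letter v i.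
Proof.
case/andP=> /wleP uv neq_uv.
have [i neq_i] : exists i, u i != v i.
  apply/existsP; apply: contraNT neq_uv => /existsPn eq_uv.
  by apply/eqP/ffunP=> i; apply/eqP/negPn.
by exists i; rewrite ltn_neqAle val_eqE neq_i uv.
Qed.

Lemma wle_neq_trans u v w i : wle u v -> wle v w -> u i != v i -> u i != w i.
Proof.
move=> /wleP uv /wleP vw; rewrite -!val_eqE -!/(letter _ _) => neq_uv.
by rewrite neq_ltn (leq_trans _ (vw i)) // ltn_neqAle neq_uv uv.
Qed.

Lemma letter_lt_neq u v i : letter u i < letter v i -> u i != v i.
Proof. by move=> lt_i; apply/negP=> /eqP eq_i; move: lt_i; rewrite /letter eq_i ltnn. Qed.

Definition splice x y k : word n := [ffun i => if val i < k then y i else x i].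

Lemma letter_splice x y k i :
  letter (splice x y k) i = if val i < k then letter y i else letter x i.
Proof. by rewrite /letter ffunE; case: ifP. Qed.

Lemma wle_splicel x y k : wle x y -> wle x (splice x y k).
Proof. by move=> /wleP xy; apply/wleP=> i; rewrite letter_splice; case: ifP. Qed.

Lemma wle_splicer x y k : wle x y -> wle (splice x y k) y.
Proof. by move=> /wleP xy; apply/wleP=> i; rewrite letter_splice; case: ifP. Qed.

Lemma splice_triword x y k :
  is_triword x -> is_triword y -> wle x y -> is_triword (splice x y k).
Proof.
move=> /triwordP[x1 x0] /triwordP[y1 y0] /wleP xy; apply/triwordP.
split=> [i i0|i j]; first by rewrite letter_splice; case: ifP=> _; [apply: y1 | apply: x1].
rewrite !letter_splice; case: (ltnP (val j) k) => [jk|kj] si0 lt_ij.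
  by move: si0; rewrite (ltn_trans lt_ij jk) => /y0; apply.
(* a 0 of [y] left of [k] is a 0 of [x] too, since [x <= y] *)
apply: x0 lt_ij; move: si0; case: ifP => // _ yi0.
by apply/eqP; rewrite -leqn0 -yi0 xy.
Qed.

Lemma splice_strictly_between u v (i j : 'I_n) : wle u v ->
  u i != v i -> u j != v j -> val i < val j ->
  wlt u (splice u v j) && wlt (splice u v j) v.
Proof.
move=> uv neq_i neq_j lt_ij; rewrite /wlt wle_splicel // wle_splicer //=.
apply/andP; split; apply/negP=> /eqP/ffunP.
  by move=> /(_ i); rewrite ffunE lt_ij => /eqP; rewrite (negPf neq_i).
by move=> /(_ j); rewrite ffunE ltnn => /eqP; rewrite (negPf neq_j).
Qed.

Lemma covers_one_letter u v : covers u v ->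
  exists i, letter u i < letter v i /\ forall j, j != i -> u j = v j.
Proof.
case/and4P=> tu tv /[dup] uv /wltW le_uv /existsPn no_between.
have [i lt_i] := wlt_letter uv; exists i; split=> [//|j neq_ji].
have neq_i := letter_lt_neq lt_i.
apply/eqP; apply: contraNT neq_ji => neq_j; rewrite -val_eqE.
case: ltngtP => // lt.
  by move: (no_between (splice u v i));
    rewrite (splice_triword i tu tv le_uv) (splice_strictly_between le_uv neq_j neq_i lt).
by move: (no_between (splice u v j));
  rewrite (splice_triword j tu tv le_uv) (splice_strictly_between le_uv neq_i neq_j lt).
Qed.

Lemma lam_one_letter x v i : x i != v i -> (forall j, j != i -> x j = v j) ->
  lam x v = (Posz (val i).+1, Posz (letter x i)).
Proof.
move=> neq_i eq_off; rewrite /lam; case: pickP => [j neq_j|/(_ i)]; last by rewrite neq_i.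
by have /eqP-> : j == i by apply: contraR neq_j => /eq_off->.
Qed.

Lemma covers_lam u v : covers u v -> exists i, [/\ letter u i < letter v i,
  forall j, j != i -> u j = v j & lam u v = (Posz (val i).+1, Posz (letter u i))].
Proof.
case/covers_one_letter=> i [lt_i eq_off]; exists i; split=> //.
by apply: lam_one_letter eq_off; apply: letter_lt_neq.
Qed.

Lemma covers_wlt u v : covers u v -> wlt u v.
Proof. by case/and4P. Qed.

Lemma covers_triword u v : covers u v -> is_triword v.
Proof. by case/and4P. Qed.

Lemma covers_wle_eq x v w : covers x v -> covers x w -> wle v w -> v = w.
Proof.
move=> xv /and4P[_ _ _ /existsPn /(_ v) not_between] vw.
apply: contraNeq not_between => neq_vw.
by rewrite (covers_triword xv) (covers_wlt xv) /wlt vw neq_vw.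
Qed.

Lemma covers_lam_fst_inj x v w :
  covers x v -> covers x w -> (lam x v).1 = (lam x w).1 -> v = w.
Proof.
move=> xv xw; have [i [_ xv_off ->]] := covers_lam xv.
have [k [_ xw_off ->]] := covers_lam xw; case=> /val_inj ik; subst k.
have vw_off j : j != i -> letter v j = letter w j.
  by move=> ji; rewrite /letter -xv_off // xw_off.
have [vw|/ltnW wv] := leqP (letter v i) (letter w i).
  apply: covers_wle_eq xv xw _; apply/wleP=> j.
  by case: (eqVneq j i) => [->|/vw_off->]; [exact: vw | exact: leqnn].
symmetry; apply: covers_wle_eq xw xv _; apply/wleP=> j.
by case: (eqVneq j i) => [->|/vw_off->]; [exact: wv | exact: leqnn].
Qed.

Lemma chain_wle x s : path (@covers n) x s -> wle x (last x s).
Proof.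
elim: s x => [|v s IH] x /=; first by move=> _; apply: wle_refl.
by case/andP=> /covers_wlt/wltW xv /IH; apply: wle_trans.
Qed.

Lemma chain_last_eq_nil x s : path (@covers n) x s -> last x s = x -> s = [::].
Proof.
case: s => [//|v s] /= /andP[/covers_wlt/andP[xv neq_xv] /chain_wle vlast] eq_last.
by move: neq_xv; rewrite (wle_anti xv) ?eqxx // -eq_last.
Qed.

Lemma chain_change_labelled x s (j : 'I_n) : path (@covers n) x s ->
  x j != last x s j -> has (fun l => l.1 == Posz (val j).+1) (labels x s).
Proof.
elim: s x => [|v s IH] x /=; first by rewrite eqxx.
case/andP=> xv /IH vs neq_j; have [i [_ xv_off ->]] := covers_lam xv.
case: (eqVneq j i) => [->|ji]; first by rewrite eqxx.
by rewrite vs ?orbT // -xv_off.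
Qed.

Lemma cover_change_persists x w t i : covers x w -> path (@covers n) w t ->
  x i != w i -> x i != last w t i.
Proof. by move=> /covers_wlt/wltW xw /chain_wle; apply: wle_neq_trans. Qed.

Section SortedChains.
Variables (r : rel (int * int)) (cmp : rel int).
Hypotheses (r_trans : transitive r) (cmp_refl : reflexive cmp)
  (r_cmp : forall a b, r a b -> cmp a.1 b.1).

(* The letter changed by [w] is also changed by the chain [v :: s], so it is
   the position of one of its labels, all of which follow [lam x v] in [r]. *)
Lemma sorted_chain_head_cmp x v s w t : path (@covers n) x (v :: s) ->
  sorted r (labels x (v :: s)) -> covers x w -> path (@covers n) w t ->
  last w t = last v s -> cmp (lam x v).1 (lam x w).1.
Proof.
move=> xs sorted_s xw wt same_end.
have [i [lt_i _ ->]] := covers_lam xw.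
have neq_i : x i != last x (v :: s) i.
  by rewrite /= -same_end; apply: cover_change_persists xw wt (letter_lt_neq lt_i).
have /hasP[l l_in /eqP <-] := chain_change_labelled xs neq_i.
rewrite /=; move: l_in; rewrite inE => /predU1P[->//|l_in].
by apply: r_cmp; move: sorted_s => /(order_path_min r_trans)/allP/(_ l l_in).
Qed.

Lemma sorted_chain_unique x s t : antisymmetric cmp ->
  path (@covers n) x s -> sorted r (labels x s) ->
  path (@covers n) x t -> sorted r (labels x t) -> last x s = last x t -> s = t.
Proof.
move=> cmp_anti; elim: s x t => [|v s IH] x [|w t] //.
- by move=> _ _ xt _ /esym /(chain_last_eq_nil xt).
- by move=> xs _ _ _ /(chain_last_eq_nil xs).
move=> xs sorted_s xt sorted_t /= same_end.
have /andP[xv vs] := xs; have /andP[xw wt] := xt.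
have eq_vw : v = w.
  apply: (covers_lam_fst_inj xv xw); apply: cmp_anti.
  by rewrite (sorted_chain_head_cmp xs sorted_s xw wt (esym same_end))
             (sorted_chain_head_cmp xt sorted_t xv vs same_end).
subst w; congr (_ :: _).
exact: IH vs (path_sorted sorted_s) wt (path_sorted sorted_t) same_end.
Qed.

End SortedChains.

Lemma increasing_chain_lexmin x s t :
  path (@covers n) x s -> sorted ltZ2 (labels x s) ->
  path (@covers n) x t -> last x t = last x s -> lexle (labels x s) (labels x t).
Proof.
elim: t x s => [|w t IH] x [|v s] //.
  by move=> xs _ _ /esym /(chain_last_eq_nil xs).
move=> xs sorted_s xt same_end; have /andP[xv vs] := xs; have /andP[xw wt] := xt.
have := sorted_chain_head_cmp ltZ2_trans (@lexx _ _) ltZ2_fst xs sorted_s xw wt same_end.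
rewrite le_eqVlt => /orP[/eqP eq_fst|lt_fst]; last by rewrite /= /ltZ2 lt_fst.
have eq_vw := covers_lam_fst_inj xv xw eq_fst; subst w.
by rewrite /= eqxx (IH v s vs (path_sorted sorted_s) wt same_end) orbT.
Qed.

Definition weight u := \sum_i letter u i.

Lemma weight_wle u v : wle u v -> weight u <= weight v.
Proof. by move=> /wleP uv; apply: leq_sum => i _. Qed.

Lemma weight_wlt u v : wlt u v -> weight u < weight v.
Proof.
move=> uv; have [i lt_i] := wlt_letter uv; move/wltW/wleP: uv => uv.
rewrite /weight (bigD1 i) //= [X in _ < X](bigD1 i) //= -addSn.
by apply: leq_add => //; apply: leq_sum => j _.
Qed.

Lemma exists_cover_below x w : is_triword x -> is_triword w -> wlt x w ->
  exists2 v, covers x v & wle v w.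
Proof.
move=> tx tw xw; pose P z := [&& is_triword z, wlt x z & wle z w].
have Pw : P w by rewrite /P tw xw wle_refl.
case: (arg_minnP weight Pw) => v /and3P[tv xv vw] v_min; exists v => //.
rewrite /covers tx tv xv /=; apply/existsP=> -[z /and3P[tz xz zv]].
have := v_min z; rewrite /P tz xz (wle_trans (wltW zv) vw) => /(_ isT).
by rewrite leqNgt weight_wlt.
Qed.

Lemma cover_at_first_difference x y (i : 'I_n) :
  is_triword x -> is_triword y -> wle x y -> x i != y i ->
  (forall j : 'I_n, val j < val i -> x j = y j) ->
  exists v, [/\ covers x v, wle v y, letter x i < letter v i &
              forall j, j != i -> x j = v j].
Proof.
move=> tx ty xy neq_i eq_before; pose w := splice x y (val i).+1.
have xw : wlt x w.
  rewrite /wlt wle_splicel //=; apply: contraNneq neq_i => /ffunP/(_ i) ->.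
  by rewrite /w ffunE ltnSn eqxx.
have w_off j : j != i -> x j = w j.
  rewrite /w ffunE -val_eqE neq_ltn => /orP[lt_ji|lt_ij].
    by rewrite ltnS (ltnW lt_ji) eq_before.
  by rewrite ltnNge lt_ij.
have [v xv vw] := exists_cover_below tx (splice_triword _ tx ty xy) xw.
have [k [lt_k v_off _]] := covers_lam xv.
have ki : k = i.
  apply/eqP; apply: contraLR lt_k => /w_off x_k; rewrite -leqNgt /letter x_k.
  exact: (wleP _ _ vw).
subst k; exists v; split; [exact: xv | | exact: lt_k | exact: v_off].
exact: wle_trans vw (wle_splicer _ xy).
Qed.

Lemma increasing_chain_exists x y : is_triword x -> is_triword y -> wle x y ->
  exists s, [/\ path (@covers n) x s, last x s = y & sorted ltZ2 (labels x s)].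
Proof.
move=> + ty; have [m] := ubnP (weight y - weight x); elim: m x => // m IH x.
move=> /ltnSE bound tx xy; have [<-|neq_xy] := eqVneq x y; first by exists [::].
have /existsP[j0 neq_j0] : [exists j, x j != y j].
  by apply: contraNT neq_xy => /existsPn eq_xy; apply/eqP/ffunP=> j; apply/eqP/negPn.
case: (arg_minnP (P := fun j => x j != y j) val neq_j0) => i neq_i i_min.
have eq_before j : val j < val i -> x j = y j.
  by move=> lt_ji; apply/eqP; apply: contraTT lt_ji => /i_min; rewrite -leqNgt.
have [v [xv vy lt_i v_off]] := cover_at_first_difference tx ty xy neq_i eq_before.
have xv_weight := weight_wlt (covers_wlt xv).
have yv_bound : weight y - weight v < m.
  exact: leq_trans (ltn_sub2l (leq_trans xv_weight (weight_wle vy)) xv_weight) bound.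
have [s [vs ys sorted_s]] := IH v yv_bound (covers_triword xv) vy.
exists (v :: s); split=> /=; [by rewrite xv vs | exact: ys |].
case: s vs ys sorted_s => [//|v' s] /= /andP[vv' v's] ys ->; rewrite andbT.
rewrite (lam_one_letter (letter_lt_neq lt_i) v_off).
have [k [lt_k _ ->]] := covers_lam vv'; rewrite /ltZ2 /= ltz_nat eqz_nat eqSS.
have [->|neq_ki] := eqVneq k i; first by rewrite ltnn eqxx ltz_nat lt_i.
have neq_k : x k != y k.
  by rewrite v_off // -ys; apply: cover_change_persists vv' v's (letter_lt_neq lt_k).
by rewrite ltnS ltn_neqAle val_eqE eq_sym neq_ki (i_min _ neq_k).
Qed.

Lemma triword_bounded : bounded_Tr n.
Proof.
pose top : word n := [ffun i => if val i == 0 then Ordinal (isT : 1 < 3) else ord_max].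
exists [ffun=> ord0], top; split.
- by apply/triwordP; split=> [i _|i j _ _]; rewrite /letter ffunE.
- apply/triwordP; split=> [i i0|i j]; rewrite /letter !ffunE; first by rewrite i0.
  by case: ifP.
move=> u /triwordP[u1 _]; split; apply/wleP=> i; rewrite /letter ffunE //.
case: ifP => [/eqP /u1|_]; last exact: letter_le2.
by have := letter_le2 u i; rewrite /letter; case: (val (u i)) => [|[|[]]].
Qed.

End Triwords.

Theorem theorem2p1 (n : nat) : (1 <= n)%N ->
  EL_labelling n /\ at_most_one_weakly_decreasing n.
Proof.
move=> _.
have ge_anti : antisymmetric (fun a b : int => b <= a)%R by move=> a b /le_anti->.
have dec_unique := sorted_chain_unique (cmp := fun a b : int => (b <= a)%R)
  (rev_trans leZ2_trans) (fun a => lexx a) (fun a b => @leZ2_fst b a) ge_anti.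
have inc_unique := sorted_chain_unique ltZ2_trans (fun a => lexx a) ltZ2_fst (@le_anti _ _).
split; [split; first exact: triword_bounded |].
- move=> x y tx ty xy; have [s [xs ys inc_s]] := increasing_chain_exists tx ty xy.
  exists s; split; [by split | exact: inc_s | move=> s' [_ [xs' ys']] inc_s' |].
    by apply: inc_unique xs' inc_s' xs inc_s _; rewrite ys ys'.
  by move=> t [_ [xt yt]]; apply: increasing_chain_lexmin xs inc_s xt _; rewrite ys yt.
- move=> x y _ _ _ s t [_ [xs ys]] dec_s [_ [xt yt]] dec_t.
  by apply: dec_unique xs dec_s xt dec_t _; rewrite ys yt.
Qed.
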